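(* Let $\mathcal{X}=\mathbb{N}$, $\mathcal{Y}=\{0,1\}\times\{0,1\}^*$, and for $d\in\mathbb{N}$ and $A,B\in\{0,1\}^d$ let $h_{A,B}(x)=(0,A)$ if $(A\oplus B)(x\bmod d)=0$ and $h_{A,B}(x)=(1,B)$ if $(A\oplus B)(x\bmod d)=1$. Let $\mathcal{H}_{\mathrm{OTP}}=\{h_{A,B}: A,B\in\{0,1\}^*, |A|=|B|, A\oplus B\text{ balanced}\}$. Then every $h\in\mathcal{H}_{\mathrm{OTP}}$ satisfies $|\mathrm{im}(h)|\le 2$, and the map $h\mapsto\mathrm{im}(h)$ is injective on $\mathcal{H}_{\mathrm{OTP}}$.
   Context: $\{0,1\}^*$ denotes finite binary strings; $\oplus$ is entrywise XOR; positions of a length-$d$ string are indexed by residues modulo $d$; a string is balanced if it has equally many 0s and 1s. $\mathrm{im}(h)=\{h(x):x\in\mathcal{X}\}$. *)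

From mathcomp Require Import all_boot.
Set Implicit Arguments. Unset Strict Implicit. Unset Printing Implicit Defensive.

(* Output space Y = {0,1} x {0,1}^*, bits as bool (false = 0, true = 1). *)
Definition Y := (bool * seq bool)%type.

(* entrywise XOR of two binary strings (used only for equal lengths) *)
Definition xorb_seq (A B : seq bool) : seq bool :=
  [seq p.1 (+) p.2 | p <- zip A B].

Definition balanced (s : seq bool) : Prop := count id s = count negb s.

Definition hAB (A B : seq bool) (x : nat) : Y :=
  if nth false (xorb_seq A B) (x %% size A) then (true, B) else (false, A).

Definition H_OTP (h : nat -> Y) : Prop :=
  exists A B : seq bool,
    size A = size B /\ balanced (xorb_seq A B) /\ h = hAB A B.

Definition im (h : nat -> Y) : Y -> Prop := fun y => exists x, h x = y.

From mathcomp Require Import all_boot.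

Set Implicit Arguments.
Unset Strict Implicit.
Unset Printing Implicit Defensive.

(* [hAB A B] only takes the values [(false, A)] and [(true, B)], and both are
   attained as soon as [A] is nonempty, since a balanced bit string of
   positive length contains both bits.  The tag of an image point says which
   of [A], [B] it carries, so the image determines [A] and [B]; when [A] is
   empty, [B] is empty too. *)

Lemma size_xorb_seq (A B : seq bool) :
  size (xorb_seq A B) = minn (size A) (size B).
Proof. by rewrite size_map size_zip. Qed.

Lemma balanced_mem (s : seq bool) (b : bool) :
  balanced s -> 0 < size s -> b \in s.
Proof.
rewrite /balanced -has_pred1 has_count => bal.
rewrite -(count_predC id s) -bal addnn double_gt0 => pos.
have -> : count (pred1 b) s = if b then count id s else count negb s.
  by case: b; apply: eq_count => -[].
by case: b; rewrite // -bal.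
Qed.

Lemma im_hAB (A B : seq bool) (y : Y) :
  im (hAB A B) y -> y \in [:: (false, A); (true, B)].
Proof. by move=> [x <-]; rewrite /hAB; case: ifP; rewrite !inE eqxx ?orbT. Qed.

Lemma im_hAB_bit (A B : seq bool) (b : bool) :
  size A = size B -> b \in xorb_seq A B ->
  im (hAB A B) (if b then (true, B) else (false, A)).
Proof.
move=> eq_size b_in; exists (index b (xorb_seq A B)).
have size_xor : size (xorb_seq A B) = size A.
  by rewrite size_xorb_seq eq_size minnn.
by rewrite /hAB modn_small ?nth_index // -size_xor index_mem.
Qed.

Lemma im_hAB_false (A B : seq bool) :
  size A = size B -> balanced (xorb_seq A B) -> im (hAB A B) (false, A).
Proof.
move=> eq_size bal; have [A0 | A_pos] := posnP (size A).
  by exists 0; rewrite /hAB nth_default // size_xorb_seq A0 min0n.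
have xor_pos : 0 < size (xorb_seq A B) by rewrite size_xorb_seq -eq_size minnn.
exact: im_hAB_bit eq_size (balanced_mem false bal xor_pos).
Qed.

Lemma im_hAB_true (A B : seq bool) :
  size A = size B -> balanced (xorb_seq A B) -> 0 < size A ->
  im (hAB A B) (true, B).
Proof.
move=> eq_size bal A_pos.
have xor_pos : 0 < size (xorb_seq A B) by rewrite size_xorb_seq -eq_size minnn.
exact: im_hAB_bit eq_size (balanced_mem true bal xor_pos).
Qed.

Lemma im_hAB_inj (A1 B1 A2 B2 : seq bool) :
  size A1 = size B1 -> balanced (xorb_seq A1 B1) -> size A2 = size B2 ->
  im (hAB A1 B1) = im (hAB A2 B2) -> A1 = A2 /\ B1 = B2.
Proof.
move=> eq_size1 bal1 eq_size2 eq_im.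
have eqA : A1 = A2.
  have := im_hAB_false eq_size1 bal1; rewrite eq_im => /im_hAB.
  by rewrite !inE => /orP[] /eqP[].
split=> //; have [A0 | A_pos] := posnP (size A1).
  by move: eq_size1 eq_size2; rewrite -eqA A0 => /esym/size0nil -> /esym/size0nil ->.
have := im_hAB_true eq_size1 bal1 A_pos; rewrite eq_im => /im_hAB.
by rewrite !inE => /orP[] /eqP[].
Qed.

Theorem lemma1 :
  (forall h : nat -> Y, H_OTP h ->
     exists s : seq Y, size s <= 2 /\ (forall y, im h y -> y \in s)) /\
  (forall h1 h2 : nat -> Y, H_OTP h1 -> H_OTP h2 -> im h1 = im h2 -> h1 = h2).
Proof.
split.
  move=> _ [A [B [_ [_ ->]]]].
  by exists [:: (false, A); (true, B)]; split=> // y /im_hAB.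
move=> _ _ [A1 [B1 [eq_size1 [bal1 ->]]]] [A2 [B2 [eq_size2 [_ ->]]]] eq_im.
by have [-> ->] := im_hAB_inj eq_size1 bal1 eq_size2 eq_im.
Qed.
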